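(* Let $d\in\mathbb{N}$ and suppose that $\mu_s(T_n)=\frac{s}{2}$ holds for every $n\le d$ and every $s\in\{1,\dots,n\}$. Then for every terminal $d$-polytope $T\subseteq\mathbb{R}^d$ and every $i\in\{1,\dots,d\}$, $\mu_i(T)=\frac{i}{2}$.
   Context: All covering minima are with respect to the integer lattice: for a convex body $K\subseteq\mathbb{R}^n$ and $i\in\{1,\dots,n\}$, $\mu_i(K)=\min\{\mu\ge0:(\mu K+\mathbb{Z}^n)\cap U\ne\emptyset$ for every $(n-i)$-dimensional affine subspace $U\subseteq\mathbb{R}^n\}$; covering minima are invariant under translations by $\mathbb{R}^n$. The standard terminal simplex is $T_n=\operatorname{conv}(-\mathbb{1}_n,e_1,\dots,e_n)\subseteq\mathbb{R}^n$. For sets $K\subseteq V$, $L\subseteq W$ containing the origin, with $\mathbb{R}^d=V\oplus W$, the direct sum is $K\oplus L=\{\lambda x+(1-\lambda)y:x\in K,y\in L,\lambda\in[0,1]\}$. A terminal $d$-polytope is a full-dimensional lattice polytope of the form $(u_1+T_{l_1})\oplus\cdots\oplus(u_k+T_{l_k})$ with respect to the coordinate decomposition $\mathbb{R}^d=\mathbb{R}^{l_1}\oplus\cdots\oplus\mathbb{R}^{l_k}$, $l_1+\dots+l_k=d$, where each translate $u_j+T_{l_j}$ ($u_j\in\mathbb{Z}^{l_j}$) contains the origin. *)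

From HB Require Import structures.
From mathcomp Require Import all_boot all_order all_algebra.
From mathcomp Require Import reals.
Unset Printing Implicit Defensive.
Import Order.TTheory GRing.Theory Num.Theory.
Local Open Scope ring_scope.

Section Defs.
Variable R : realType.

Definition conv {m n : nat} (v : 'I_m -> 'rV[R]_n) : 'rV[R]_n -> Prop :=
  fun x => exists l : 'I_m -> R,
    (forall j, 0 <= l j) /\ \sum_j l j = 1 /\ x = \sum_j l j *: v j.

(* vertices of the standard terminal simplex T_n:
   vertex 0 is -1_n, vertex j (1 <= j <= n) is e_j *)
Definition simplex_vert (n : nat) (j : 'I_n.+1) : 'rV[R]_n :=
  \row_(k < n) (if (j == 0 :> nat) then -1 else ((k.+1 == j :> nat)%:R)).

Definition terminal_simplex (n : nat) : 'rV[R]_n -> Prop :=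
  conv (simplex_vert n).

Definition int_vec {n : nat} (z : 'rV[int]_n) : 'rV[R]_n := map_mx intr z.

Definition dilate_plus_lattice {n : nat} (mu : R) (K : 'rV[R]_n -> Prop)
  : 'rV[R]_n -> Prop :=
  fun x => exists k z, K k /\ x = mu *: k + int_vec z.

(* U is a (dimension m) affine subspace of R^n:  U = p + rowspace B with
   B an m x n matrix of rank m *)
Definition affine_subspace {n m : nat} (p : 'rV[R]_n) (B : 'M[R]_(m, n))
  : 'rV[R]_n -> Prop := fun x => (x - p <= B)%MS.

Definition covers {n : nat} (K : 'rV[R]_n -> Prop) (i : nat) (mu : R) : Prop :=
  forall (p : 'rV[R]_n) (B : 'M[R]_(n - i, n)), \rank B = (n - i)%N ->
    exists x, affine_subspace p B x /\ dilate_plus_lattice mu K x.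

Definition is_covering_minimum {n : nat} (K : 'rV[R]_n -> Prop) (i : nat) (m : R)
  : Prop :=
  0 <= m /\ covers K i m /\ (forall mu, 0 <= mu -> covers K i mu -> m <= mu).

(* Coordinate decomposition R^d = R^{l_1} + ... + R^{l_k}, ls = [l_1;...;l_k],
   block j (0-based) occupies coordinates off j, ..., off j + l_(j+1) - 1. *)
Definition blk_off (ls : seq nat) (j : nat) : nat := sumn (take j ls).
Definition blk_len (ls : seq nat) (j : nat) : nat := nth 0%N ls j.
Definition in_blk (ls : seq nat) (j c : nat) : bool :=
  (blk_off ls j <= c < blk_off ls j + blk_len ls j)%N.

(* vertices of T_{l_j} embedded in block j of R^d *)
Definition blk_vert (d : nat) (ls : seq nat) (j : nat)
  (t : 'I_(blk_len ls j).+1) : 'rV[R]_d :=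
  \row_(c < d) (if (t == 0 :> nat) then (if in_blk ls j c then -1 else 0)
                else ((c == blk_off ls j + t.-1 :> nat)%N)%:R).

(* u_j embedded in block j, where u_j is the block-j part of U in Z^d *)
Definition blk_transl (d : nat) (ls : seq nat) (U : 'rV[int]_d) (j : nat)
  : 'rV[R]_d :=
  \row_(c < d) (if in_blk ls j c then (U 0 c)%:~R else 0).

Definition blk_piece (d : nat) (ls : seq nat) (U : 'rV[int]_d) (j : nat)
  : 'rV[R]_d -> Prop :=
  fun x => exists y, conv (blk_vert d ls j) y /\ x = blk_transl d ls U j + y.

(* direct sum P_0 (+) ... (+) P_(k-1) of sets in complementary coordinate
   subspaces (n-ary version of {lam x + (1-lam) y}) *)
Definition direct_sum {d : nat} (k : nat) (P : nat -> 'rV[R]_d -> Prop)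
  : 'rV[R]_d -> Prop :=
  fun x => exists (l : 'I_k -> R) (y : 'I_k -> 'rV[R]_d),
    (forall j, 0 <= l j) /\ \sum_j l j = 1 /\ (forall j : 'I_k, P j (y j)) /\
    x = \sum_j l j *: y j.

Definition terminal_polytope (d : nat) (T : 'rV[R]_d -> Prop) : Prop :=
  exists (ls : seq nat) (U : 'rV[int]_d),
    all (fun l => 0 < l)%N ls /\ sumn ls = d /\
    (forall j, (j < size ls)%N -> blk_piece d ls U j 0) /\
    (forall x, T x <-> direct_sum (size ls) (blk_piece d ls U) x).

End Defs.

From HB Require Import structures.
From mathcomp Require Import all_boot all_order all_algebra.
From mathcomp Require Import reals.
From mathcomp Require Import zify lra ring.
From Stdlib Require Import Classical.
Import Order.TTheory GRing.Theory Num.Theory.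
Local Open Scope ring_scope.

(* Fix a coordinate projection P of rank n. Say that a set K in im P has half
   covering minima relative to P if, inside im P, every affine subspace of
   codimension i meets (i/2)K + Z^d, and for mu < s/2 some affine subspace of
   codimension s misses mu'K + Z^d for every mu' <= mu.  Each block u_j + T_l_j
   has this property by the hypothesis on T_l_j, and the property passes to direct
   sums over complementary blocks.  To meet a subspace V, cover its projection
   V1 to the first block at codimension j and its part W inside the second block
   at codimension i - j, and combine the two points with weight j/i.  To avoid,
   split s = s1 + s2, take the product of avoiding subspaces at scales mu s1/s and
   mu s2/s: a point of mu'(lam y1 + (1 - lam) y2) + Z^d in it projects to hits at
   scales mu' lam and mu' (1 - lam), one of which is strictly too large, so
   mu' > mu.  For P the identity the relative notion is the covering minimum. *)

Section CoordinateBlocks.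
Context {R : pzRingType} {d : nat}.

Lemma sum_mul_delta n (G : 'I_n -> R) (N : nat) (i0 : 'I_n) :
  val i0 = N -> \sum_i G i * (i == N :> nat)%:R = G i0.
Proof.
move=> <-; rewrite (bigD1 i0) //= eqxx mulr1 big1 ?addr0 // => i ne.
by rewrite val_eqE (negbTE ne) mulr0.
Qed.

Lemma sum_mul_delta_off n o (F : 'I_n -> R) (k0 : 'I_n) :
  \sum_(k < n) F k * ((o + k0)%N == (o + k)%N :> nat)%:R = F k0.
Proof.
under eq_bigr do rewrite eqn_add2l eq_sym.
exact: sum_mul_delta.
Qed.

Lemma sum_mul_delta_out n o (F : 'I_n -> R) (c : nat) : ~~ (o <= c < o + n)%N ->
  \sum_(k < n) F k * (c == (o + k)%N :> nat)%:R = 0.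
Proof.
move=> c_out; rewrite big1 // => k _; have := ltn_ord k.
by case: eqP => [c_eq|_]; [move: c_out; rewrite c_eq; lia | rewrite mulr0].
Qed.

Definition coord_sel (o l : nat) : 'M[R]_(d, l) :=
  \matrix_(i, k) (i == (o + k)%N :> nat)%:R.
Definition coord_emb (o l : nat) : 'M[R]_(l, d) :=
  \matrix_(k, j) (j == (o + k)%N :> nat)%:R.
Definition coord_proj (o l : nat) : 'M[R]_d := coord_sel o l *m coord_emb o l.

Lemma block_coordP o l (c : nat) :
  (exists k0 : 'I_l, c = (o + k0)%N) \/ ~~ (o <= c < o + l)%N.
Proof.
case: (boolP (o <= c < o + l)%N) => [c_in|]; last by right.
have k0_lt : (c - o < l)%N by lia.
by left; exists (Ordinal k0_lt) => /=; lia.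
Qed.

Lemma coord_sel_rowE o l (x : 'rV[R]_d) {k : 'I_l} {c : 'I_d} :
  val c = (o + k)%N -> (x *m coord_sel o l) 0 k = x 0 c.
Proof. by move=> c_eq; rewrite mxE; under eq_bigr do rewrite mxE; exact: sum_mul_delta. Qed.

Lemma coord_proj_rowE o l (x : 'rV[R]_d) (c : 'I_d) :
  (x *m coord_proj o l) 0 c = if (o <= c < o + l)%N then x 0 c else 0.
Proof.
rewrite mulmxA mxE; under eq_bigr do rewrite [coord_emb _ _ _ _]mxE.
have [[k0 c_eq]|c_out] := block_coordP o l c; last first.
  by rewrite sum_mul_delta_out // (negbTE c_out).
rewrite c_eq sum_mul_delta_off (coord_sel_rowE _ _ x c_eq) -c_eq.
by have := ltn_ord k0; rewrite c_eq; case: ifP => //; lia.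
Qed.

Lemma coord_emb_sel o l : (o + l <= d)%N -> coord_emb o l *m coord_sel o l = 1%:M.
Proof.
move=> old; apply/matrixP => k k'; rewrite !mxE.
have hk : (o + k' < d)%N by have := ltn_ord k'; lia.
under eq_bigr do rewrite !mxE.
rewrite (@sum_mul_delta _ (fun i => (i == (o + k)%N :> nat)%:R) _ (Ordinal hk)) //=.
by rewrite eqn_add2l eq_sym.
Qed.

Lemma coord_emb_proj o l : (o + l <= d)%N -> coord_emb o l *m coord_proj o l = coord_emb o l.
Proof. by move=> old; rewrite mulmxA coord_emb_sel // mul1mx. Qed.

Lemma coord_proj_idem o l : (o + l <= d)%N -> coord_proj o l *m coord_proj o l = coord_proj o l.
Proof. by move=> old; rewrite {1}/coord_proj -mulmxA coord_emb_proj. Qed.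

Lemma coord_emb_sel_next a l1 l2 : coord_emb a l1 *m coord_sel (a + l1) l2 = 0.
Proof.
apply/matrixP => k k'; rewrite !mxE big1 // => i _; rewrite !mxE.
have := ltn_ord k; case: eqP => [->|_]; last by rewrite mul0r.
by case: eqP => [|_]; [lia | rewrite mulr0].
Qed.

Lemma coord_emb_next_sel a l1 l2 : coord_emb (a + l1) l2 *m coord_sel a l1 = 0.
Proof.
apply/matrixP => k k'; rewrite !mxE big1 // => i _; rewrite !mxE.
have := ltn_ord k'; case: eqP => [->|_]; last by rewrite mul0r.
by case: eqP => [|_]; [lia | rewrite mulr0].
Qed.

Lemma coord_proj_next a l1 l2 : coord_proj a l1 *m coord_proj (a + l1) l2 = 0.
Proof. by rewrite mulmxA -(mulmxA (coord_sel _ _)) coord_emb_sel_next mulmx0 mul0mx. Qed.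

Lemma coord_proj_prev a l1 l2 : coord_proj (a + l1) l2 *m coord_proj a l1 = 0.
Proof. by rewrite mulmxA -(mulmxA (coord_sel _ _)) coord_emb_next_sel mulmx0 mul0mx. Qed.

Lemma coord_proj_split a l1 l2 :
  coord_proj a (l1 + l2) = coord_proj a l1 + coord_proj (a + l1) l2.
Proof.
rewrite /coord_proj.
have -> : coord_sel a (l1 + l2) = row_mx (coord_sel a l1) (coord_sel (a + l1) l2).
  apply/matrixP => i k; rewrite -(splitK k); case: (split k) => k' /=.
    by rewrite row_mxEl !mxE.
  by rewrite row_mxEr !mxE /= addnA.
have -> : coord_emb a (l1 + l2) = col_mx (coord_emb a l1) (coord_emb (a + l1) l2).
  apply/matrixP => k j; rewrite -(splitK k); case: (split k) => k' /=.
    by rewrite col_mxEu !mxE.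
  by rewrite col_mxEd !mxE /= addnA.
by rewrite mul_row_col.
Qed.

Lemma coord_proj_full : coord_proj 0 d = 1%:M.
Proof.
rewrite /coord_proj.
have -> : coord_sel 0 d = 1%:M by apply/matrixP => i k; rewrite !mxE.
have -> : coord_emb 0 d = 1%:M by apply/matrixP => i k; rewrite !mxE eq_sym.
by rewrite mulmx1.
Qed.

End CoordinateBlocks.

Arguments coord_emb_sel {R d o l}.
Arguments coord_emb_proj {R d o l}.
Arguments coord_proj_idem {R d o l}.

Lemma map_coord_sel (R S : pzRingType) (f : {rmorphism R -> S}) d o l :
  map_mx f (coord_sel o l : 'M[R]_(d, l)) = coord_sel o l.
Proof. by apply/matrixP => i k; rewrite !mxE rmorph_nat. Qed.

Lemma map_coord_emb (R S : pzRingType) (f : {rmorphism R -> S}) d o l :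
  map_mx f (coord_emb o l : 'M[R]_(l, d)) = coord_emb o l.
Proof. by apply/matrixP => i k; rewrite !mxE rmorph_nat. Qed.

Section CoordinateRank.
Context {F : fieldType} {d : nat}.

Lemma mxrank_coord_proj o l : (o + l <= d)%N -> \rank (coord_proj o l : 'M[F]_d) = l.
Proof.
move=> old; apply/eqP; rewrite eqn_leq (leq_trans (mxrankM_maxl _ _)) ?rank_leq_col //=.
rewrite -{1}(mxrank1 F l) -(coord_emb_sel old) -{1}(coord_emb_proj old).
exact: leq_trans (mxrankM_maxl _ _) (mxrankM_maxr _ _).
Qed.

Lemma mxrank_mul_coord_emb o l m (B : 'M[F]_(m, l)) :
  (o + l <= d)%N -> \rank (B *m (coord_emb o l : 'M_(l, d))) = \rank B.
Proof.
move=> old; apply/eqP; rewrite eqn_leq mxrankM_maxl /=.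
by rewrite -{1}(mulmx1 B) -(coord_emb_sel old) mulmxA mxrankM_maxl.
Qed.

Lemma mxrank_mul_coord_sel o l m (V : 'M[F]_(m, d)) :
  V *m coord_proj o l = V -> \rank (V *m coord_sel o l) = \rank V.
Proof.
move=> hV; apply/eqP; rewrite eqn_leq mxrankM_maxl /=.
by rewrite -{1}hV mulmxA mxrankM_maxl.
Qed.

End CoordinateRank.

Arguments mxrank_coord_proj {F d o l}.

Section RowSpaces.
Context {F : fieldType}.

Lemma exists_row_basis m n r (A : 'M[F]_(m, n)) :
  \rank A = r -> exists B : 'M[F]_(r, n), \rank B = r /\ (B :=: A)%MS.
Proof.
by move=> <-; exists (row_base A); split; [rewrite (eq_row_base A).1 | exact: eq_row_base].
Qed.

Lemma submx_addsmx_proj n (P : 'M[F]_n) m1 m2 (V1 : 'M_(m1, n)) (V2 : 'M_(m2, n)) (x : 'rV_n) :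
  V1 *m P = V1 -> V2 *m P = 0 -> (x <= V1 + V2)%MS -> (x *m P <= V1)%MS.
Proof.
move=> h1 h2 /sub_addsmxP [[u1 u2] ->].
by rewrite mulmxDl -!mulmxA h1 h2 mulmx0 addr0 submxMl.
Qed.

Lemma mxrank_col_mx_proj n (P1 P2 : 'M[F]_n) m1 m2 (V1 : 'M_(m1, n)) (V2 : 'M_(m2, n)) :
  V1 *m P1 = V1 -> V2 *m P2 = V2 -> P2 *m P1 = 0 ->
  \rank (col_mx V1 V2) = (\rank V1 + \rank V2)%N.
Proof.
move=> h1 h2 h21; rewrite -(addsmxE V1 V2).1 mxrank_disjoint_sum //.
have [D1 e1] := submxP (capmxSl V1 V2); have [D2 e2] := submxP (capmxSr V1 V2).
have c1 : (V1 :&: V2)%MS *m P1 = (V1 :&: V2)%MS by rewrite {1}e1 -mulmxA h1.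
have c2 : (V1 :&: V2)%MS *m P2 = (V1 :&: V2)%MS by rewrite {1}e2 -mulmxA h2.
by rewrite -c1 -c2 -mulmxA h21 mulmx0.
Qed.

End RowSpaces.

Arguments exists_row_basis {F m n r}.
Arguments submx_addsmx_proj {F n P m1 m2 V1 V2 x}.
Arguments mxrank_col_mx_proj {F n P1 P2 m1 m2 V1 V2}.

Section Lattice.
Context {R : realType}.

Lemma int_vecD n (z1 z2 : 'rV[int]_n) : int_vec R (z1 + z2) = int_vec R z1 + int_vec R z2.
Proof. exact: map_mxD. Qed.

Lemma int_vec_coord_sel d o l (z : 'rV[int]_d) :
  int_vec R z *m coord_sel o l = int_vec R (z *m coord_sel o l).
Proof. by rewrite /int_vec map_mxM map_coord_sel. Qed.

Lemma int_vec_coord_emb d o l (z : 'rV[int]_l) :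
  int_vec R z *m (coord_emb o l : 'M_(l, d)) = int_vec R (z *m coord_emb o l).
Proof. by rewrite /int_vec map_mxM map_coord_emb. Qed.

Definition lattice_preserving {d} (P : 'M[R]_d) : Prop :=
  forall z : 'rV[int]_d, exists z', int_vec R z *m P = int_vec R z'.

Lemma lattice_preserving_coord_proj d o l : lattice_preserving (coord_proj o l : 'M_d).
Proof. by move=> z; rewrite mulmxA int_vec_coord_sel int_vec_coord_emb; eexists. Qed.

End Lattice.

Lemma convex0_scale (R : numFieldType) (V : lmodType R) (K : V -> Prop) mu mu' k :
  (forall x y t, K x -> K y -> 0 <= t <= 1 -> K (t *: x + (1 - t) *: y)) ->
  K 0 -> 0 <= mu' <= mu -> K k -> exists k', K k' /\ mu' *: k = mu *: k'.
Proof.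
move=> convK K0 /andP [mu'0 mu'mu] Kk.
have [mu0|mu_neq0] := eqVneq mu 0.
  have -> : mu' = 0 by apply/le_anti; rewrite mu'0 andbT -mu0.
  by exists k; rewrite mu0 !scale0r.
have mu_gt0 : 0 < mu by rewrite lt_def mu_neq0 (le_trans mu'0 mu'mu).
exists ((mu' / mu) *: k + (1 - mu' / mu) *: 0); split.
  by apply: convK; rewrite ?divr_ge0 ?(ltW mu_gt0) //= ler_pdivrMr // mul1r.
by rewrite scaler0 addr0 scalerA mulrCA divff // mulr1.
Qed.

Arguments convex0_scale {R V K mu mu' k}.

Section Convexity.
Context {R : realType} {n : nat}.

Lemma conv_convex m (v : 'I_m -> 'rV[R]_n) x y t :
  conv R v x -> conv R v y -> 0 <= t <= 1 -> conv R v (t *: x + (1 - t) *: y).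
Proof.
move=> [l1 [h1 [s1 ->]]] [l2 [h2 [s2 ->]]] /andP [t0 t1].
exists (fun j => t * l1 j + (1 - t) * l2 j); split; [|split].
- by move=> j; apply: addr_ge0; apply: mulr_ge0; rewrite // subr_ge0.
- by rewrite big_split /= -!mulr_sumr s1 s2 !mulr1 addrC subrK.
- rewrite !scaler_sumr -big_split /=; apply: eq_bigr => j _.
  by rewrite !scalerA -scalerDl.
Qed.

Lemma conv_mulmx m p (v : 'I_m -> 'rV[R]_n) (E : 'M[R]_(n, p)) (w : 'I_m -> 'rV[R]_p) :
  (forall t, w t = v t *m E) ->
  forall x, conv R w x <-> exists y, conv R v y /\ x = y *m E.
Proof.
move=> wE x; split.
  move=> [l [l_ge0 [l_sum ->]]]; exists (\sum_j l j *: v j); split; first by exists l.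
  by rewrite mulmx_suml; apply: eq_bigr => j _; rewrite wE scalemxAl.
move=> [y [[l [l_ge0 [l_sum ->]]] ->]]; exists l; do 2 split => //.
by rewrite mulmx_suml; apply: eq_bigr => j _; rewrite wE scalemxAl.
Qed.

End Convexity.

Arguments conv_mulmx {R n m p v E w}.

Section RelativeCoveringMinima.
Context {R : realType} {d : nat}.
Implicit Types (P : 'M[R]_d) (K : 'rV[R]_d -> Prop) (mu : R).

Definition covers_within P n K i mu : Prop :=
  forall m (V : 'M_(m, d)) (p : 'rV_d), V *m P = V -> p *m P = p ->
  \rank V = (n - i)%N -> exists k z, K k /\ (mu *: k + int_vec R z - p <= V)%MS.

(* Avoidance is demanded at every scale [mu' <= mu]: in a direct sum a hit
   projects onto each block at the scale [mu'] times the block weight. *)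
Definition avoided_within P n K s mu : Prop :=
  exists m (V : 'M_(m, d)) (p : 'rV_d),
  [/\ V *m P = V, p *m P = p, \rank V = (n - s)%N &
      forall mu' k z, 0 <= mu' <= mu -> K k -> ~ (mu' *: k + int_vec R z - p <= V)%MS].

Record half_covering_minima P n K : Prop := HalfCoveringMinima {
  half_minima_supp : forall k, K k -> k *m P = k;
  half_minima_nonempty : exists k, K k;
  half_minima_covers : forall i, (i <= n)%N -> covers_within P n K i (i%:R / 2);
  half_minima_avoided : forall s mu, (s <= n)%N -> 0 <= mu -> mu < s%:R / 2 ->
    avoided_within P n K s mu }.

Lemma half_covering_minima_ext P n K K' :
  (forall x, K x <-> K' x) -> half_covering_minima P n K -> half_covering_minima P n K'.
Proof.
move=> KK' [supp [k0 Kk0] cov avd]; split.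
- by move=> k /KK' /supp.
- by exists k0; apply/KK'.
- move=> i le_in m V p VP pP rV; have [k [z [Kk hit]]] := cov i le_in m V p VP pP rV.
  by exists k, z; split=> //; apply/KK'.
- move=> s mu le_sn mu_ge0 mu_lt; have [m [V [p [VP pP rV miss]]]] := avd s mu le_sn mu_ge0 mu_lt.
  by exists m, V, p; split=> // mu' k z mu'_le /KK'; exact: miss.
Qed.

Lemma covers_within0 P n K mu : P *m P = P -> \rank P = n ->
  (forall k, K k -> k *m P = k) -> (exists k, K k) -> covers_within P n K 0 mu.
Proof.
move=> PP rP supp [k Kk] m V p VP pP; rewrite subn0 => rV.
exists k, 0; split=> //.
have sVP : (V <= P)%MS by rewrite -VP submxMl.
have VP_eq : (V == P)%MS by rewrite -(mxrank_leqif_eq sVP) rV rP.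
have -> : mu *: k + int_vec R 0 - p = (mu *: k - p) *m P.
  by rewrite mulmxBl -scalemxAl supp // pP /int_vec map_mx0 addr0.
by rewrite (eqmxP VP_eq) submxMl.
Qed.

Lemma half_minima_avoiding_subspace P n K s mu :
  P *m P = P -> \rank P = n -> half_covering_minima P n K -> (s <= n)%N -> 0 <= mu ->
  (s = 0%N -> mu = 0) -> ((0 < s)%N -> mu < s%:R / 2) ->
  exists m (V : 'M_(m, d)) (p : 'rV_d), [/\ V *m P = V, p *m P = p, \rank V = (n - s)%N &
  forall mu' k z, 0 <= mu' -> K k -> (mu' *: k + int_vec R z - p <= V)%MS ->
    mu <= mu' /\ ((0 < s)%N -> mu < mu')].
Proof.
move=> PP rP [_ _ _ avd] le_sn mu_ge0 mu0 mu_lt.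
have [s0|s_gt0] := posnP s.
  exists d, P, 0; rewrite mul0mx rP s0 subn0 (mu0 s0).
  by split=> // mu' k z mu'_ge0.
have [m [V [p [VP pP rV miss]]]] := avd s mu le_sn mu_ge0 (mu_lt s_gt0).
exists m, V, p; split=> // mu' k z mu'_ge0 Kk hit.
have lt_mu : mu < mu'.
  by rewrite ltNge; apply/negP => le_mu; apply: (miss mu' k z _ Kk hit); rewrite mu'_ge0.
by split=> //; apply: ltW.
Qed.

End RelativeCoveringMinima.

Arguments covers_within0 {R d P n K mu}.
Arguments half_minima_avoiding_subspace {R d P n K s mu}.

Lemma half_minima_covering_minimum (R : realType) d (K : 'rV[R]_d -> Prop) i :
  half_covering_minima 1%:M d K -> (i <= d)%N -> is_covering_minimum R K i (i%:R / 2).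
Proof.
move=> [_ _ cov avd] le_id; split; [by rewrite divr_ge0 ?ler0n | split].
  move=> p B rB; have [k [z [Kk hit]]] := cov i le_id _ B p (mulmx1 B) (mulmx1 p) rB.
  by exists (i%:R / 2 *: k + int_vec R z); split=> //; exists k, z.
move=> mu mu_ge0 covK; rewrite leNgt; apply/negP => mu_lt.
have [m [V [p [_ _ rV miss]]]] := avd i mu le_id mu_ge0 mu_lt.
have [B [rB eqBV]] := exists_row_basis V rV.
have [x [hit [k [z [Kk xE]]]]] := covK p B rB.
by apply: (miss mu k z _ Kk); [rewrite mu_ge0 lexx | rewrite -eqBV -xE].
Qed.

Lemma split_half_weight (R : realFieldType) (i j : nat) : (j <= i)%N ->
  exists2 lam : R, 0 <= lam <= 1 &
    i%:R / 2 * lam = j%:R / 2 /\ i%:R / 2 * (1 - lam) = (i - j)%:R / 2.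
Proof.
move=> le_ji; have [i0|i_gt0] := posnP i.
  have j0 : j = 0%N by move: le_ji; rewrite i0; lia.
  by exists 1; rewrite ?ler01 ?lexx // i0 j0 mulr1 subrr mulr0 mul0r.
have i_neq0 : (i%:R : R) != 0 by rewrite pnatr_eq0 -lt0n.
exists (j%:R / i%:R).
  by rewrite divr_ge0 ?ler0n //= ler_pdivrMr ?ltr0n // mul1r ler_nat.
by rewrite natrB //; split; field.
Qed.

Lemma share_lt_half (R : realFieldType) (mu : R) (s sb : nat) :
  0 <= mu -> mu < s%:R / 2 -> (0 < sb)%N -> mu * sb%:R / s%:R < sb%:R / 2.
Proof.
move=> mu_ge0 mu_lt sb_gt0; have s_gt0 : (0 : R) < s%:R by lra.
by rewrite ltr_pdivrMr //; move: mu_lt (ltr0Sn R sb.-1); rewrite prednK //; nra.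
Qed.

Arguments share_lt_half {R mu s sb}.

Section DirectSum2.
Context {R : realType} {d : nat}.

Definition direct_sum2 (K1 K2 : 'rV[R]_d -> Prop) : 'rV[R]_d -> Prop := fun x =>
  exists lam y1 y2, [/\ 0 <= lam <= 1, K1 y1, K2 y2 & x = lam *: y1 + (1 - lam) *: y2].

Variables (P1 P2 : 'M[R]_d) (n1 n2 : nat) (K1 K2 K : 'rV[R]_d -> Prop).
Hypotheses (P11 : P1 *m P1 = P1) (P22 : P2 *m P2 = P2).
Hypotheses (P12 : P1 *m P2 = 0) (P21 : P2 *m P1 = 0).
Hypotheses (rP1 : \rank P1 = n1) (rP2 : \rank P2 = n2).
Hypotheses (latP1 : lattice_preserving P1) (latP2 : lattice_preserving P2).
Hypotheses (minK1 : half_covering_minima P1 n1 K1) (minK2 : half_covering_minima P2 n2 K2).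
Hypothesis (KE : forall x, K x <-> direct_sum2 K1 K2 x).

Lemma fixP1_P2_eq0 {m} {x : 'M[R]_(m, d)} : x *m P1 = x -> x *m P2 = 0.
Proof. by move=> <-; rewrite -mulmxA P12 mulmx0. Qed.

Lemma fixP2_P1_eq0 {m} {x : 'M[R]_(m, d)} : x *m P2 = x -> x *m P1 = 0.
Proof. by move=> <-; rewrite -mulmxA P21 mulmx0. Qed.

Lemma direct_sum2_supp k : K k -> k *m (P1 + P2) = k.
Proof.
have [supp1 _ _ _] := minK1; have [supp2 _ _ _] := minK2.
move/KE => [lam [y1 [y2 [_ Ky1 Ky2 ->]]]].
rewrite mulmxDl -!scalemxAl !mulmxDr (fixP1_P2_eq0 (supp1 _ Ky1)) (fixP2_P1_eq0 (supp2 _ Ky2)).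
by rewrite (supp1 _ Ky1) (supp2 _ Ky2) !addr0 add0r.
Qed.

Lemma direct_sum2_nonempty : exists k, K k.
Proof.
have [_ [y1 Ky1] _ _] := minK1; have [_ [y2 Ky2] _ _] := minK2.
exists (1 *: y1 + (1 - 1) *: y2); apply/KE; exists 1, y1, y2.
by split; rewrite ?ler01 ?lexx.
Qed.

Lemma cap_kermx_fixP2 {m} {V : 'M[R]_(m, d)} :
  V *m (P1 + P2) = V -> (V :&: kermx P1)%MS *m P2 = (V :&: kermx P1)%MS.
Proof.
move=> VP; have WP1 : (V :&: kermx P1)%MS *m P1 = 0.
  by apply/eqP; rewrite -sub_kermx capmxSr.
have [D WE] := submxP (capmxSl V (kermx P1)).
have : (V :&: kermx P1)%MS *m (P1 + P2) = (V :&: kermx P1)%MS by rewrite {1}WE -mulmxA VP.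
by rewrite mulmxDr WP1 add0r.
Qed.

Lemma direct_sum2_covers i : (i <= n1 + n2)%N ->
  covers_within (P1 + P2) (n1 + n2) K i (i%:R / 2).
Proof.
move=> le_i m V p VP pP rV.
have [_ _ cov1 _] := minK1; have [_ _ cov2 _] := minK2.
pose V1 := V *m P1; pose W := (V :&: kermx P1)%MS.
have V1P1 : V1 *m P1 = V1 by rewrite /V1 -mulmxA P11.
have WV : (W <= V)%MS := capmxSl _ _.
have WP2 : W *m P2 = W := cap_kermx_fixP2 VP.
have rV1 : (\rank V1 <= n1)%N by rewrite -rP1 mxrankM_maxr.
have rW : (\rank W <= n2)%N by rewrite -rP2 -{1}WP2 mxrankM_maxr.
have rV1W : (\rank V1 + \rank W = n1 + n2 - i)%N by rewrite -rV mxrank_mul_ker.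
pose j := (n1 - \rank V1)%N.
have le_ji : (j <= i)%N by rewrite /j; lia.
have pP1 : (p *m P1) *m P1 = p *m P1 by rewrite -mulmxA P11.
have [k1 [z1 [Kk1 /submxP [a hit1]]]] :=
  cov1 j (leq_subr _ _) _ V1 (p *m P1) V1P1 pP1 (ltac:(rewrite /j subKn //)).
pose q := (p + a *m V) *m P2.
have qP2 : q *m P2 = q by rewrite -mulmxA P22.
have [k2 [z2 [Kk2 /submxP [b hit2]]]] :=
  cov2 (i - j)%N (ltac:(rewrite /j; lia)) _ W q WP2 qP2 (ltac:(rewrite /j; lia)).
have [lam lam01 [lam1 lam2]] := split_half_weight R _ _ le_ji.
exists (lam *: k1 + (1 - lam) *: k2), (z1 + z2); split; first by apply/KE; exists lam, k1, k2.
have aVP : a *m V *m (P1 + P2) = a *m V by rewrite -mulmxA VP.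
have -> : i%:R / 2 *: (lam *: k1 + (1 - lam) *: k2) + int_vec R (z1 + z2) - p = a *m V + b *m W.
  rewrite scalerDr !scalerA lam1 lam2 int_vecD.
  have e1 : j%:R / 2 *: k1 + int_vec R z1 = a *m V *m P1 + p *m P1.
    by apply/eqP; rewrite -subr_eq hit1 /V1 mulmxA.
  have e2 : (i - j)%:R / 2 *: k2 + int_vec R z2 = b *m W + (p + a *m V) *m P2.
    by apply/eqP; rewrite -subr_eq hit2.
  rewrite addrACA e1 e2; move: pP aVP; rewrite !mulmxDr mulmxDl.
  move: (p *m P1) (p *m P2) (a *m V *m P1) (a *m V *m P2) => x1 x2 x3 x4 <- <-.
  by apply/rowP => c; rewrite !mxE; ring.
by rewrite addmx_sub ?submxMl // (submx_trans (submxMl b W) WV).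
Qed.

Lemma direct_sum2_hit_blocks {m1 m2} {V1 : 'M_(m1, d)} {V2 : 'M_(m2, d)} {p1 p2 mu' lam y1 y2 z} :
  V1 *m P1 = V1 -> V2 *m P2 = V2 -> p1 *m P1 = p1 -> p2 *m P2 = p2 -> K1 y1 -> K2 y2 ->
  (mu' *: (lam *: y1 + (1 - lam) *: y2) + int_vec R z - (p1 + p2) <= col_mx V1 V2)%MS ->
  (exists z1, ((mu' * lam) *: y1 + int_vec R z1 - p1 <= V1)%MS) /\
  (exists z2, ((mu' * (1 - lam)) *: y2 + int_vec R z2 - p2 <= V2)%MS).
Proof.
move=> V1P1 V2P2 p1P1 p2P2 Ky1 Ky2; rewrite -addsmxE => hit.
have [supp1 _ _ _] := minK1; have [supp2 _ _ _] := minK2.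
have [z1 z1E] := latP1 z; have [z2 z2E] := latP2 z.
split; [exists z1 | exists z2].
  move: (submx_addsmx_proj V1P1 (fixP2_P1_eq0 V2P2) hit).
  rewrite mulmxBl !mulmxDl -!scalemxAl mulmxDl -!scalemxAl z1E p1P1 (fixP2_P1_eq0 p2P2).
  by rewrite (supp1 _ Ky1) (fixP2_P1_eq0 (supp2 _ Ky2)) scaler0 !addr0 scalerA.
rewrite addsmxC in hit; move: (submx_addsmx_proj V2P2 (fixP1_P2_eq0 V1P1) hit).
rewrite mulmxBl !mulmxDl -!scalemxAl mulmxDl -!scalemxAl z2E p2P2 (fixP1_P2_eq0 p1P1).
by rewrite (supp2 _ Ky2) (fixP1_P2_eq0 (supp1 _ Ky1)) scaler0 !add0r scalerA.
Qed.

Lemma direct_sum2_avoided s mu : (s <= n1 + n2)%N -> 0 <= mu -> mu < s%:R / 2 ->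
  avoided_within (P1 + P2) (n1 + n2) K s mu.
Proof.
move=> le_s mu_ge0 mu_lt.
have s_gt0 : (0 < s)%N.
  by rewrite lt0n; apply: contraTneq mu_lt => ->; rewrite mul0r ltNge mu_ge0.
pose s1 := minn s n1; pose s2 := (s - s1)%N.
have s12 : (s1 + s2 = s)%N by rewrite /s2 /s1; lia.
have le_s1 : (s1 <= n1)%N by rewrite /s1; lia.
have le_s2 : (s2 <= n2)%N by rewrite /s2 /s1; lia.
have share_ge0 sb : 0 <= mu * sb%:R / s%:R by rewrite divr_ge0 ?mulr_ge0 ?ler0n.
have share0 sb : sb = 0%N -> mu * sb%:R / s%:R = 0 by move=> ->; rewrite mulr0 mul0r.
have [m1 [V1 [p1 [V1P1 p1P1 rV1 low1]]]] := half_minima_avoiding_subspace P11 rP1 minK1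
  le_s1 (share_ge0 s1) (share0 s1) (share_lt_half mu_ge0 mu_lt).
have [m2 [V2 [p2 [V2P2 p2P2 rV2 low2]]]] := half_minima_avoiding_subspace P22 rP2 minK2
  le_s2 (share_ge0 s2) (share0 s2) (share_lt_half mu_ge0 mu_lt).
exists (m1 + m2)%N, (col_mx V1 V2), (p1 + p2); split.
- by rewrite mul_col_mx !mulmxDr V1P1 V2P2 (fixP1_P2_eq0 V1P1) (fixP2_P1_eq0 V2P2) addr0 add0r.
- by rewrite !mulmxDr !mulmxDl p1P1 p2P2 (fixP1_P2_eq0 p1P1) (fixP2_P1_eq0 p2P2) addr0 add0r.
- by rewrite (mxrank_col_mx_proj V1P1 V2P2 P21) rV1 rV2 -s12; lia.
move=> mu' k z /andP [mu'_ge0 mu'_le] /KE [lam [y1 [y2 [/andP [lam_ge0 lam_le1] Ky1 Ky2 ->]]]].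
move/(direct_sum2_hit_blocks V1P1 V2P2 p1P1 p2P2 Ky1 Ky2) => [[z1 hit1] [z2 hit2]].
have [lb1 lt1] := low1 _ _ _ (mulr_ge0 mu'_ge0 lam_ge0) Ky1 hit1.
have lam'_ge0 : 0 <= 1 - lam by rewrite subr_ge0.
have [lb2 lt2] := low2 _ _ _ (mulr_ge0 mu'_ge0 lam'_ge0) Ky2 hit2.
have mu12 : mu * s1%:R / s%:R + mu * s2%:R / s%:R = mu.
  by rewrite -mulrDl -mulrDr -natrD s12 mulfK // pnatr_eq0 -lt0n.
have [s1_0|s1_gt0] := posnP s1.
  have s2_gt0 : (0 < s2)%N by rewrite -s12 s1_0 in s_gt0.
  by move: (lt2 s2_gt0); lra.
by move: (lt1 s1_gt0); lra.
Qed.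

Lemma half_covering_minima_direct_sum2 : half_covering_minima (P1 + P2) (n1 + n2) K.
Proof.
split; [exact: direct_sum2_supp | exact: direct_sum2_nonempty | |].
- by move=> i; exact: direct_sum2_covers.
- by move=> s mu; exact: direct_sum2_avoided.
Qed.

End DirectSum2.

Section BlockPiece.
Context {R : realType} {d : nat}.
Variables (ls : seq nat) (U : 'rV[int]_d) (j : nat).
Local Notation o := (blk_off ls j).
Local Notation l := (blk_len ls j).
Local Notation u := (blk_transl R d ls U j).
Local Notation K := (blk_piece R d ls U j).
Local Notation emb := (coord_emb o l : 'M[R]_(l, d)).
Local Notation sel := (coord_sel o l : 'M[R]_(d, l)).
Local Notation proj := (coord_proj o l : 'M[R]_d).
Hypothesis old : (o + l <= d)%N.

Lemma blk_transl_proj : u *m proj = u.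
Proof. by apply/rowP => c; rewrite coord_proj_rowE !mxE /in_blk; case: ifP => // ->. Qed.

Lemma blk_vertE t : blk_vert R d ls j t = simplex_vert R l t *m emb.
Proof.
apply/rowP => c; rewrite !mxE; under eq_bigr do rewrite !mxE.
have [[k0 c_eq]|c_out] := block_coordP o l c.
  rewrite c_eq sum_mul_delta_off /in_blk -c_eq.
  have -> : (o <= c < o + l)%N by have := ltn_ord k0; lia.
  by case: eqP => // t_neq0; congr (_%:R); apply/eqP/eqP; lia.
rewrite sum_mul_delta_out // /in_blk (negbTE c_out).
by case: eqP => // t_neq0; have := ltn_ord t; case: eqP => // c_eq; move: c_out; lia.
Qed.

Lemma blk_pieceE x : K x <-> exists y, terminal_simplex R l y /\ x = u + y *m emb.
Proof.
have convE := conv_mulmx blk_vertE.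
split=> [[y [/convE [y' [Ty' ->]] ->]]|[y [Ty ->]]]; first by exists y'.
by exists (y *m emb); split=> //; apply/convE; exists y.
Qed.

Lemma blk_piece_supp k : K k -> k *m proj = k.
Proof.
by move/blk_pieceE => [y [_ ->]]; rewrite mulmxDl blk_transl_proj -mulmxA coord_emb_proj.
Qed.

Lemma blk_piece_convex x y t : K x -> K y -> 0 <= t <= 1 -> K (t *: x + (1 - t) *: y).
Proof.
move=> [x1 [cx1 ->]] [y1 [cy1 ->]] t01.
exists (t *: x1 + (1 - t) *: y1); split; first exact: conv_convex.
by apply/rowP => c; rewrite !mxE; ring.
Qed.

Hypothesis blk_piece0 : K 0.
Hypothesis simplex_minima : forall s, (1 <= s <= l)%N ->
  is_covering_minimum R (terminal_simplex R l) s (s%:R / 2).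

Lemma blk_piece_covers i : (i <= l)%N -> covers_within proj l K i (i%:R / 2).
Proof.
have [-> _|i_gt0 le_il] := posnP i.
  apply: covers_within0 (coord_proj_idem old) (mxrank_coord_proj old) blk_piece_supp _.
  by exists 0.
move=> m V p VP pP rV.
have [_ [cov _]] := simplex_minima i (ltac:(by rewrite i_gt0)).
have rVsel : \rank (V *m sel) = (l - i)%N by rewrite mxrank_mul_coord_sel.
have [B [rB BV]] := exists_row_basis (V *m sel) rVsel.
pose q := (p - i%:R / 2 *: u) *m sel.
have [x [hit [k [z [Tk xE]]]]] := cov q B rB.
exists (u + k *m emb), (z *m coord_emb o l); split; first by apply/blk_pieceE; exists k.
have qE : q *m emb = p - i%:R / 2 *: u.
  by rewrite -mulmxA mulmxBl pP -scalemxAl blk_transl_proj.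
have -> : i%:R / 2 *: (u + k *m emb) + int_vec R (z *m coord_emb o l) - p = (x - q) *m emb.
  rewrite mulmxBl qE xE mulmxDl -scalemxAl -int_vec_coord_emb.
  by apply/rowP => c; rewrite !mxE; ring.
by rewrite -VP mulmxA submxMr // -BV.
Qed.

Lemma blk_piece_avoided s mu : (s <= l)%N -> 0 <= mu -> mu < s%:R / 2 ->
  avoided_within proj l K s mu.
Proof.
move=> le_sl mu_ge0 mu_lt.
have s_gt0 : (0 < s)%N.
  by rewrite lt0n; apply: contraTneq mu_lt => ->; rewrite mul0r ltNge mu_ge0.
have [_ [_ minimal]] := simplex_minima s (ltac:(by rewrite s_gt0)).
have : ~ covers R (terminal_simplex R l) s mu.
  by move=> /(minimal mu mu_ge0); rewrite leNgt mu_lt.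
move=> /not_all_ex_not [q] /not_all_ex_not [B] /(imply_to_and (_ = _)) [rB miss].
exists _, (B *m emb), (q *m emb + mu *: u); split.
- by rewrite -mulmxA coord_emb_proj.
- by rewrite mulmxDl -mulmxA coord_emb_proj // -scalemxAl blk_transl_proj.
- by rewrite mxrank_mul_coord_emb.
move=> mu' k z mu'_le Kk hit; apply: miss.
have [k' [Kk' k'E]] := convex0_scale blk_piece_convex blk_piece0 mu'_le Kk.
have [y [Ty kE]] := (blk_pieceE k').1 Kk'.
exists (mu *: y + int_vec R (z *m coord_sel o l)); split; last by exists y, (z *m coord_sel o l).
have := submxMr sel hit; rewrite -mulmxA coord_emb_sel // mulmx1 /affine_subspace.
congr (_ <= _)%MS; rewrite k'E kE -int_vec_coord_sel !mulmxBl !mulmxDl -!scalemxAl mulmxDl.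
rewrite -!mulmxA coord_emb_sel // !mulmx1.
by apply/rowP => c; rewrite !mxE; ring.
Qed.

Lemma half_covering_minima_blk_piece : half_covering_minima proj l K.
Proof.
split; [exact: blk_piece_supp | by exists 0 | exact: blk_piece_covers |].
exact: blk_piece_avoided.
Qed.

End BlockPiece.

Section DirectSumRecursion.
Context {R : realType} {d : nat}.
Variable P : nat -> 'rV[R]_d -> Prop.

Lemma direct_sum1 x : direct_sum R 1 P x <-> P 0%N x.
Proof.
split=> [[l [y [_ [l_sum [Py ->]]]]]|Px].
  by move: l_sum; rewrite !big_ord1 => ->; rewrite scale1r; exact: (Py ord0).
exists (fun _ => 1), (fun _ => x); split; first by move=> _; exact: ler01.
by rewrite !big_ord1 scale1r; split=> //; split=> // k; rewrite (ord1 k).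
Qed.

Lemma direct_sumS_direct_sum2 m a0 x : direct_sum R m P a0 ->
  direct_sum R m.+1 P x -> direct_sum2 (direct_sum R m P) (P m) x.
Proof.
move=> Pa0 [l [y [l_ge0 [l_sum [Py ->]]]]].
rewrite big_ord_recr /= in l_sum; rewrite big_ord_recr /=.
set w := widen_ord (leqnSn m) in l_sum *.
set lam := \sum_(i < m) l (w i) in l_sum *.
have lam_ge0 : 0 <= lam by apply: sumr_ge0 => i _.
have l_last : l ord_max = 1 - lam by rewrite -l_sum addrAC subrr add0r.
have [lam0|lam_neq0] := eqVneq lam 0.
  have l0 i : l (w i) = 0.
    by apply: (@psumr_eq0P _ _ xpredT (fun i => l (w i)) _ lam0).
  exists 0, a0, (y ord_max); split=> //; first by rewrite lexx ler01.
    exact: (Py ord_max).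
  by rewrite big1 ?l_last ?lam0 ?scale0r ?add0r ?subr0 // => i _; rewrite l0 scale0r.
have lam_gt0 : 0 < lam by rewrite lt_def lam_neq0 lam_ge0.
exists lam, (\sum_(i < m) (l (w i) / lam) *: y (w i)).
exists (y ord_max); split => //.
- by rewrite lam_ge0 /= -subr_ge0 -l_last.
- exists (fun i => l (w i) / lam), (fun i => y (w i)).
  split; first by move=> i; rewrite divr_ge0.
  by rewrite -mulr_suml -/lam divff //; split=> //; split=> // i; exact: (Py (w i)).
- exact: (Py ord_max).
- rewrite -l_last scaler_sumr; congr (_ + _); apply: eq_bigr => i _.
  by rewrite scalerA mulrCA divff // mulr1.
Qed.

Lemma direct_sum2_direct_sumS m x :
  direct_sum2 (direct_sum R m P) (P m) x -> direct_sum R m.+1 P x.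
Proof.
move=> [lam [a [b [/andP [lam_ge0 lam_le1] [la [ya [la_ge0 [la_sum [Pya ->]]]]] Pb ->]]]].
pose L (i : 'I_m.+1) := if insub (val i) is Some i' then lam * la i' else 1 - lam.
pose Y (i : 'I_m.+1) := if insub (val i) is Some i' then ya i' else b.
exists L, Y; split.
  move=> i; rewrite /L; case: insubP => [i' _ _|_]; first by rewrite mulr_ge0.
  by rewrite subr_ge0.
split.
  rewrite big_ord_recr /= /L; under eq_bigr do rewrite valK.
  by rewrite insubF ?ltnn // -mulr_sumr la_sum mulr1 addrC subrK.
split.
  move=> i; rewrite /Y; case: insubP => [i' _ i'E|not_lt]; first by rewrite -i'E; exact: Pya.
  have -> : nat_of_ord i = m by apply/eqP; rewrite eqn_leq -ltnS ltn_ord leqNgt.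
  exact: Pb.
rewrite big_ord_recr /= /L /Y; under [X in _ = X + _]eq_bigr do rewrite valK.
rewrite insubF ?ltnn //; congr (_ + _).
by rewrite scaler_sumr; apply: eq_bigr => i _; rewrite scalerA.
Qed.

Lemma direct_sumS m : (exists a, direct_sum R m P a) ->
  forall x, direct_sum R m.+1 P x <-> direct_sum2 (direct_sum R m P) (P m) x.
Proof.
move=> [a0 Pa0] x; split; first exact: (direct_sumS_direct_sum2 m a0 x Pa0).
exact: direct_sum2_direct_sumS.
Qed.

End DirectSumRecursion.

Lemma blk_offS ls m : (m < size ls)%N -> blk_off ls m.+1 = (blk_off ls m + blk_len ls m)%N.
Proof. by move=> lt_m; rewrite /blk_off (take_nth 0%N) // sumn_rcons. Qed.

Lemma blk_off_le ls m : (blk_off ls m <= sumn ls)%N.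
Proof. by rewrite /blk_off -{2}(cat_take_drop m ls) sumn_cat leq_addr. Qed.

Section TerminalPolytope.
Context {R : realType} {d : nat}.
Variables (ls : seq nat) (U : 'rV[int]_d).
Hypothesis sum_ls : sumn ls = d.
Hypothesis pieces0 : forall j, (j < size ls)%N -> blk_piece R d ls U j 0.
Hypothesis simplex_minima : forall n, (n <= d)%N -> forall s, (1 <= s <= n)%N ->
  is_covering_minimum R (terminal_simplex R n) s (s%:R / 2).

Lemma blk_end_le j : (j < size ls)%N -> (blk_off ls j + blk_len ls j <= d)%N.
Proof. by move=> lt_j; rewrite -blk_offS // -sum_ls blk_off_le. Qed.

Lemma half_covering_minima_blk_piece_at j : (j < size ls)%N ->
  half_covering_minima (coord_proj (blk_off ls j) (blk_len ls j)) (blk_len ls j)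
    (blk_piece R d ls U j).
Proof.
move=> lt_j; have end_le := blk_end_le j lt_j.
by apply: half_covering_minima_blk_piece (pieces0 j lt_j) _ => //; apply: simplex_minima; lia.
Qed.

Lemma half_covering_minima_direct_sum m : (0 < m <= size ls)%N ->
  half_covering_minima (coord_proj 0 (blk_off ls m)) (blk_off ls m)
    (direct_sum R m (blk_piece R d ls U)).
Proof.
elim: m => [//|m IH] /andP [_ lt_m]; rewrite blk_offS //.
have minP := half_covering_minima_blk_piece_at m lt_m.
have [m0|m_gt0] := posnP m.
  have off0 : blk_off ls 0 = 0%N by rewrite /blk_off take0.
  rewrite m0 off0 add0n; rewrite m0 off0 in minP.
  exact: half_covering_minima_ext (fun x => iff_sym (direct_sum1 _ x)) minP.
have minS := IH (ltac:(by rewrite m_gt0 ltnW)).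
have end_le := blk_end_le m lt_m.
have [_ nonempty _ _] := minS.
rewrite -{1}[blk_off ls m]add0n coord_proj_split add0n.
apply: half_covering_minima_direct_sum2 minS minP _.
- by apply: coord_proj_idem; lia.
- exact: coord_proj_idem.
- by rewrite -{2}[blk_off ls m]add0n coord_proj_next.
- by rewrite -{1}[blk_off ls m]add0n coord_proj_prev.
- by apply: mxrank_coord_proj; lia.
- exact: mxrank_coord_proj.
- exact: lattice_preserving_coord_proj.
- exact: lattice_preserving_coord_proj.
- exact: (direct_sumS _ _ nonempty).
Qed.

End TerminalPolytope.

Arguments half_covering_minima_direct_sum {R d ls U}.

Theorem corollary4p4 (R : realType) (d : nat) :
  (forall n : nat, (n <= d)%N -> forall s : nat, (1 <= s <= n)%N ->
     is_covering_minimum R (terminal_simplex R n) s (s%:R / 2)) ->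
  forall T : 'rV[R]_d -> Prop, terminal_polytope R d T ->
  forall i : nat, (1 <= i <= d)%N ->
    is_covering_minimum R T i (i%:R / 2).
Proof.
move=> simplex_minima T [ls [U [_ [sum_ls [pieces0 TE]]]]] i /andP [i_gt0 le_id].
have size_gt0 : (0 < size ls <= size ls)%N.
  rewrite leqnn andbT lt0n size_eq0; apply: contraTneq le_id => ls0.
  by move: sum_ls; rewrite ls0 /= => <-; rewrite -ltnNge.
have := half_covering_minima_direct_sum sum_ls pieces0 simplex_minima _ size_gt0.
rewrite /blk_off take_size sum_ls coord_proj_full => minT.
apply: half_minima_covering_minimum le_id.
exact: half_covering_minima_ext (fun x => iff_sym (TE x)) minT.
Qed.
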